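(* Let $b_1,b_2\in\mathbb{R}$ satisfy $b_1>0$, $3b_1+b_2<0$ and $6b_1+b_2>0$, let $\phi$ be as below, $g(p)=p+\phi(p)$, and set $u_-=1-\alpha_0$, $u_0=1/2$, $u_+=\alpha_0$. Then: (G1) $g(u_+-\delta)+g(u_-+\delta)=2u_0$ for all $\delta$; (G2) $g'(u_0)>1$ and $g'(u_-)=g'(u_+)<1$; (G3) $g''(p)>0$ for $p\in(u_-,u_0)$ and $g''(p)<0$ for $p\in(u_0,u_+)$.
   Context: $\phi(p)=b_1p(1-p)^4+b_2p^2(1-p)^3-b_2p^3(1-p)^2-b_1p^4(1-p)$; $\alpha_0=1/2+\beta_0$ with $\beta_0=\frac{\sqrt{-(b_1-b_2)(3b_1+b_2)}}{2(b_1-b_2)}$, so that $1-\alpha_0<1/2<\alpha_0$ are the roots of $\phi$ in $(0,1)$ other than $1/2$. *)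

From Stdlib Require Import Reals.
From Coquelicot Require Import Coquelicot.
Open Scope R_scope.

Definition phi (b1 b2 p : R) : R :=
  b1 * p * (1 - p) ^ 4 + b2 * p ^ 2 * (1 - p) ^ 3
  - b2 * p ^ 3 * (1 - p) ^ 2 - b1 * p ^ 4 * (1 - p).

Definition g (b1 b2 p : R) : R := p + phi b1 b2 p.

Definition beta0 (b1 b2 : R) : R :=
  sqrt (- (b1 - b2) * (3 * b1 + b2)) / (2 * (b1 - b2)).

Definition alpha0 (b1 b2 : R) : R := 1 / 2 + beta0 b1 b2.

From Stdlib Require Import Reals Lra.
From Coquelicot Require Import Coquelicot.
Open Scope R_scope.

(* Everything becomes transparent in the centred variable
   x = p - 1/2.  In it [phi] is an odd polynomial, so g(1/2 + x) + g(1/2 - x) = 1,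
   which gives (G1) since u+ - d and u- + d are symmetric about 1/2.  The
   derivatives of g are explicit polynomials in x:
     g'(1/2 + x)  = 1 - (3b1+b2)/8 + 3(b1+b2) x^2 + 10(b1-b2) x^4,
     g''(1/2 + x) = x (6(b1+b2) + 40(b1-b2) x^2).
   The number beta0 is the positive root of 4(b1-b2) beta^2 = -(3b1+b2); in
   terms of this relation g'(1/2 +- beta0) = 1 + b1 (3b1+b2)/(b1-b2) < 1, while
   g'(1/2) = 1 - (3b1+b2)/8 > 1, giving (G2).  For x^2 < beta0^2 the quadratic
   factor of g'' is below -4(6b1+b2) < 0, so g'' has the sign of -x on
   (-beta0, beta0), which is (G3). *)

Section CenteredPolynomials.

Variables b1 b2 : R.

Definition dg (x : R) : R :=
  1 - (3 * b1 + b2) / 8 + 3 * (b1 + b2) * x ^ 2 + 10 * (b1 - b2) * x ^ 4.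

Definition d2g (x : R) : R :=
  x * (6 * (b1 + b2) + 40 * (b1 - b2) * x ^ 2).

(* phi is odd about 1/2, so g is point-symmetric about (1/2, 1/2). *)
Lemma g_point_symmetric (x : R) : g b1 b2 (1 / 2 + x) + g b1 b2 (1 / 2 - x) = 1.
Proof. unfold g, phi. field. Qed.

Lemma Derive_g (p : R) : Derive (g b1 b2) p = dg (p - 1 / 2).
Proof.
  apply is_derive_unique; unfold g, phi, dg.
  auto_derive; [exact I | field].
Qed.

Lemma Derive2_g (p : R) : Derive_n (g b1 b2) 2 p = d2g (p - 1 / 2).
Proof.
  simpl. rewrite (Derive_ext _ (fun q => dg (q - 1 / 2))) by apply Derive_g.
  apply is_derive_unique; unfold dg, d2g.
  auto_derive; [exact I | field].
Qed.

Lemma dg_even (x : R) : dg (- x) = dg x.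
Proof. unfold dg. ring. Qed.

Lemma dg_at_root (beta : R) :
  b1 - b2 <> 0 -> 4 * (b1 - b2) * beta ^ 2 = - (3 * b1 + b2) ->
  dg beta = 1 + b1 * (3 * b1 + b2) / (b1 - b2).
Proof.
  intros HB Hroot. unfold dg.
  replace (beta ^ 4) with ((beta ^ 2) ^ 2) by ring.
  replace (beta ^ 2) with (- (3 * b1 + b2) / (4 * (b1 - b2)))
    by (rewrite <- Hroot; field; exact HB).
  field. exact HB.
Qed.

(* Below the root, the quadratic factor of g'' is at most -4(6b1+b2) < 0. *)
Lemma d2g_factor_neg (beta x : R) :
  0 < b1 - b2 -> 0 < 6 * b1 + b2 ->
  4 * (b1 - b2) * beta ^ 2 = - (3 * b1 + b2) -> x ^ 2 < beta ^ 2 ->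
  6 * (b1 + b2) + 40 * (b1 - b2) * x ^ 2 < 0.
Proof.
  intros HB H6 Hroot Hx.
  assert (Hmono : (b1 - b2) * x ^ 2 < (b1 - b2) * beta ^ 2)
    by (apply Rmult_lt_compat_l; assumption).
  lra.
Qed.

End CenteredPolynomials.

Lemma beta0_spec (b1 b2 : R) :
  0 < b1 - b2 -> 3 * b1 + b2 < 0 ->
  0 < beta0 b1 b2 /\ 4 * (b1 - b2) * beta0 b1 b2 ^ 2 = - (3 * b1 + b2).
Proof.
  intros HB Hc. unfold beta0.
  assert (Hrad : 0 < - (b1 - b2) * (3 * b1 + b2)) by nra.
  split.
  - apply Rdiv_lt_0_compat; [apply sqrt_lt_R0 | ]; lra.
  - unfold Rdiv. rewrite Rpow_mult_distr, pow2_sqrt by lra.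
    field. lra.
Qed.

Theorem mainTheorem8 (b1 b2 : R) :
  0 < b1 -> 3 * b1 + b2 < 0 -> 0 < 6 * b1 + b2 ->
  let um := 1 - alpha0 b1 b2 in
  let u0 := 1 / 2 in
  let up := alpha0 b1 b2 in
  (* (G1) *)
  (forall d : R, g b1 b2 (up - d) + g b1 b2 (um + d) = 2 * u0) /\
  (* (G2) *)
  (1 < Derive (g b1 b2) u0 /\
   Derive (g b1 b2) um = Derive (g b1 b2) up /\
   Derive (g b1 b2) up < 1) /\
  (* (G3) *)
  (forall p : R, um < p < u0 -> 0 < Derive_n (g b1 b2) 2 p) /\
  (forall p : R, u0 < p < up -> Derive_n (g b1 b2) 2 p < 0).
Proof.
  intros Hb1 Hc H6 um u0 up.
  assert (HB : 0 < b1 - b2) by lra.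
  destruct (beta0_spec b1 b2 HB Hc) as [Hbeta Hroot].
  set (beta := beta0 b1 b2) in *.
  assert (Hup : up = 1 / 2 + beta) by reflexivity.
  assert (Hum : um = 1 / 2 - beta) by (unfold um; fold up; lra).
  clearbody um up beta; subst um up u0.
  split; [| split; [| split]].
  - intro d. replace (1 / 2 + beta - d) with (1 / 2 + (beta - d)) by ring.
    replace (1 / 2 - beta + d) with (1 / 2 - (beta - d)) by ring.
    rewrite g_point_symmetric. lra.
  - rewrite !Derive_g.
    replace (1 / 2 - beta - 1 / 2) with (- beta) by ring.
    replace (1 / 2 + beta - 1 / 2) with beta by ring.
    rewrite dg_even, (dg_at_root _ _ beta) by (assumption || lra).
    split; [unfold dg; lra | split; [reflexivity |]].
    assert (Hneg : b1 * (3 * b1 + b2) / (b1 - b2) < 0).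
    { apply Rdiv_neg_pos; nra. }
    lra.
  - intros p Hp. rewrite Derive2_g. unfold d2g.
    assert (Hfac := d2g_factor_neg b1 b2 beta (p - 1 / 2) HB H6 Hroot ltac:(nra)).
    nra.
  - intros p Hp. rewrite Derive2_g. unfold d2g.
    assert (Hfac := d2g_factor_neg b1 b2 beta (p - 1 / 2) HB H6 Hroot ltac:(nra)).
    nra.
Qed.
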